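(* Let $s(x)=\sum_{n\ge0}s_nx^n\in\mathbb{R}[[x]]$ with $s_0=1$, and let $t(x)=1/s(x)=\sum_{n\ge0}t_nx^n$. Set $s_n=t_n=0$ for $n<0$. Then for all $M,N\in\mathbb{N}$, $$\det(s_{i+j-M})_{i,j=0}^{N+M}=(-1)^{N+\binom{M+1}{2}}\det(t_{i+j+M+2})_{i,j=0}^{N-1},$$ where the determinant of a $0\times 0$ matrix is $1$.
   Context: $\mathbb{N}=\{0,1,2,\dots\}$. *)

From HB Require Import structures.
From mathcomp Require Import all_boot all_order all_algebra.
Set Implicit Arguments. Unset Strict Implicit. Unset Printing Implicit Defensive.
Import Order.TTheory GRing.Theory Num.Theory.
Local Open Scope ring_scope.

(* A formal power series over R is represented by its coefficient sequence
   a : nat -> R (a n = coefficient of x^n). *)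

Definition inverse_series (R : ringType) (s t : nat -> R) : Prop :=
  forall n : nat, \sum_(k < n.+1) s k * t (n - k)%N = (n == 0%N)%:R.

Definition coef_shift (R : ringType) (s : nat -> R) (n M : nat) : R :=
  if (n < M)%N then 0 else s (n - M)%N.

From HB Require Import structures.
From mathcomp Require Import all_boot all_order all_algebra zify.
Set Implicit Arguments. Unset Strict Implicit. Unset Printing Implicit Defensive.
Import Order.TTheory GRing.Theory Num.Theory.
Local Open Scope ring_scope.

(* Right-multiplying the Hankel matrix H = (s_(i+j-M)) by the unitriangular
   Toeplitz matrix U = (t_(j-i))_(i<=j) does not change the determinant.
   Since s t = 1, the product H U is block lower triangular: its upper left
   (M+1) x (M+1) block is the anti-diagonal identity, with determinant
   (-1)^C(M+1,2), and its lower right N x N block is -(S T), where S is the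
   unitriangular Toeplitz matrix (s_(a-c))_(c<=a) and T = (t_(i+j+M+2)). *)

Definition hankel (R : nzRingType) (a : nat -> R) (n : nat) : 'M[R]_n :=
  \matrix_(i, j) a (i + j)%N.

Definition upper_toeplitz (R : nzRingType) (a : nat -> R) (n : nat) : 'M[R]_n :=
  \matrix_(i, j) if (i <= j)%N then a (j - i)%N else 0.

Definition antidiag_mx (R : nzRingType) (n : nat) : 'M[R]_n :=
  \matrix_(i, j) ((i + j)%N == n.-1)%:R.

Lemma big_ord_leq_cond (R : nzRingType) (n j : nat) (f : nat -> R) :
  (j < n)%N ->
  \sum_(k < n) (if (k <= j)%N then f k else 0) = \sum_(k < j.+1) f k.
Proof.
move=> ltjn; rewrite (big_ord_widen n f ltjn) [RHS]big_mkcond.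
by apply: eq_bigr => k _; rewrite ltnS.
Qed.

Lemma det_upper_toeplitz (R : comNzRingType) (a : nat -> R) (n : nat) :
  \det (upper_toeplitz a n) = a 0%N ^+ n.
Proof.
rewrite -det_tr det_trig; last first.
  by apply/is_trig_mxP => i j ltij; rewrite !mxE leqNgt ltij.
rewrite (eq_bigr (fun=> a 0%N)) => [|i _]; last by rewrite !mxE leqnn subnn.
by rewrite prodr_const card_ord.
Qed.

Lemma det_antidiag_mx (R : comNzRingType) (n : nat) :
  \det (antidiag_mx R n) = (-1) ^+ 'C(n, 2).
Proof.
elim: n => [|n IHn]; first by rewrite det_mx00.
rewrite (expand_det_col _ ord_max) big_ord_recl big1 ?addr0 => [|i _]; last first.
  rewrite !mxE /= (_ : (bump 0 i + n == n)%N = false) ?mul0r //.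
  by rewrite /bump; apply/eqP; lia.
rewrite !mxE /= eqxx mul1r /cofactor /= add0n.
have -> : row' 0 (col' ord_max (antidiag_mx R n.+1)) = antidiag_mx R n.
  apply/matrixP => i j; rewrite !mxE /=; congr (_%:R).
  have /= ltj := ltn_ord j.
  by rewrite /bump leq0n leqNgt ltj; apply/eqP/eqP; lia.
by rewrite IHn -exprD binS bin1 addnC.
Qed.

Lemma inverse_series_coef0 (R : nzRingType) (s t : nat -> R) :
  s 0%N = 1 -> inverse_series s t -> t 0%N = 1.
Proof. by move=> s0 inv; have := inv 0%N; rewrite big_ord1 s0 mul1r. Qed.

Section ShiftedHankel.

Variables (R : comNzRingType) (s t : nat -> R) (M : nat).
Hypothesis inv : inverse_series s t.

Let H n := hankel (fun k => coef_shift s k M) n.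

Lemma mul_shifted_hankel_toeplitz n (i j : 'I_n) :
  (H n *m upper_toeplitz t n) i j
  = \sum_(k < j.+1) coef_shift s (i + k) M * t (j - k)%N.
Proof.
rewrite mxE.
rewrite -(big_ord_leq_cond (fun k => coef_shift s (i + k) M * t (j - k)%N)
  (ltn_ord j)).
by apply: eq_bigr => k _; rewrite !mxE; case: ifP; rewrite ?mulr0.
Qed.

(* For i <= M the sum is the coefficient of x^(i+j-M) in s t. *)
Lemma shifted_conv_top (i j : nat) : (i <= M)%N ->
  \sum_(k < j.+1) coef_shift s (i + k) M * t (j - k)%N = ((i + j)%N == M)%:R.
Proof.
move=> leiM.
rewrite -(big_mkord xpredT (fun k => coef_shift s (i + k) M * t (j - k)%N)).
have vanish m : (m <= M - i)%N ->
    \sum_(0 <= k < m) coef_shift s (i + k) M * t (j - k)%N = 0.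
  move=> lem; rewrite big1_seq // => k /andP[_].
  rewrite mem_iota => /andP[_ ltk].
  by rewrite /coef_shift ifT ?mul0r //; lia.
have [ltj|lej] := ltnP j (M - i).
  by rewrite vanish // (_ : (i + j == M)%N = false) //; apply/eqP; lia.
rewrite (@big_cat_nat _ _ _ (M - i)%N) //=; last by lia.
rewrite vanish // add0r -{1}(add0n (M - i)%N) big_addn.
have -> : (j.+1 - (M - i) = (j - (M - i)).+1)%N by lia.
have -> : ((i + j)%N == M) = (j - (M - i) == 0)%N by apply/eqP/eqP; lia.
rewrite big_mkord -inv; apply: eq_bigr => k _.
by rewrite /coef_shift ifF; [congr (s _ * t _)|]; lia.
Qed.

(* The coefficient of x^(a+M+b+2) in s t vanishes; the left side is all of it
   but its first a + 1 terms. *)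
Lemma shifted_conv_bottom (a b : nat) :
  \sum_(k < (M.+1 + b).+1) coef_shift s (M.+1 + a + k) M * t (M.+1 + b - k)%N
  = - \sum_(c < a.+1) s (a - c)%N * t (c + b + M + 2)%N.
Proof.
have := inv (a.+1 + (M.+1 + b))%N; rewrite addSn /= mulr0n.
have -> : ((a + (M.+1 + b)).+2 = a.+1 + (M.+1 + b).+1)%N by lia.
rewrite big_split_ord /= => conv0.
apply/eqP; rewrite -addr_eq0 addrC; apply/eqP; rewrite -[RHS]conv0.
congr (_ + _).
  rewrite (reindex_inj rev_ord_inj) /=; apply: eq_bigr => c _.
  by have ltc := ltn_ord c; congr (s _ * t _); lia.
apply: eq_bigr => k _.
by rewrite /coef_shift ifF; [congr (s _ * t _)|]; lia.
Qed.

Lemma det_shifted_hankel (N : nat) :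
  s 0%N = 1 ->
  \det (H (M.+1 + N)) = (-1) ^+ (N + 'C(M.+1, 2)) *
    \det (hankel (fun k => t (k + M + 2)%N) N).
Proof.
move=> s0.
have t0 := inverse_series_coef0 s0 inv.
pose HU := H (M.+1 + N) *m upper_toeplitz t (M.+1 + N).
have -> : \det (H (M.+1 + N)) = \det HU.
  by rewrite det_mulmx det_upper_toeplitz t0 expr1n mulr1.
have HUE (i j : 'I_(M.+1 + N)) :
    HU i j = \sum_(k < j.+1) coef_shift s (i + k) M * t (j - k)%N.
  exact: mul_shifted_hankel_toeplitz.
have top_right : ursubmx HU = 0.
  apply/matrixP => i j; rewrite 2![LHS]mxE HUE shifted_conv_top /=; last first.
    by rewrite -ltnS.
  by rewrite mxE (_ : (i + (M.+1 + j) == M)%N = false) //; apply/eqP; lia.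
have top_left : ulsubmx HU = antidiag_mx R M.+1.
  apply/matrixP => i j; rewrite 2![LHS]mxE HUE shifted_conv_top /=; last first.
    by rewrite -ltnS.
  by rewrite mxE.
have bottom_right : drsubmx HU
    = - ((upper_toeplitz s N)^T *m hankel (fun k => t (k + M + 2)%N) N).
  apply/matrixP => a b; rewrite 2![LHS]mxE HUE /= shifted_conv_bottom !mxE.
  congr (- _).
  rewrite -(big_ord_leq_cond (fun c => s (a - c)%N * t (c + b + M + 2)%N)
    (ltn_ord a)).
  by apply: eq_bigr => c _; rewrite !mxE; case: ifP; rewrite ?mul0r.
rewrite -[HU]submxK top_right det_lblock top_left bottom_right.
rewrite det_antidiag_mx -scaleN1r detZ det_mulmx det_tr det_upper_toeplitz s0.
by rewrite expr1n mul1r mulrA exprD [(-1) ^+ N * _]mulrC.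
Qed.

End ShiftedHankel.

Theorem lemma2p1 (R : realFieldType) (s t : nat -> R) (M N : nat) :
  s 0%N = 1 ->
  inverse_series s t ->
  \det (\matrix_(i < (N + M).+1, j < (N + M).+1) coef_shift s (i + j) M)
  = (-1) ^+ (N + 'C(M.+1, 2)) *
    \det (\matrix_(i < N, j < N) t (i + j + M + 2)%N).
Proof.
move=> s0 inv.
rewrite [(N + M)%N]addnC -addSn.
exact: det_shifted_hankel.
Qed.
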